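(* Let $k\geq 2$ be an integer and let $P$ be a finite poset of width $w$ that does not contain $\mathbf{k}+\mathbf{k}$ as an induced subposet. Then the incomparability graph $G$ of $P$ has pathwidth at most $(2k-3)w-1$.
   Context: The width of a poset is the maximum size of an antichain. $\mathbf{k}+\mathbf{k}$ denotes the poset consisting of two disjoint chains $A,B$ with $|A|=|B|=k$ in which every element of $A$ is incomparable with every element of $B$; ''$P$ does not contain $\mathbf{k}+\mathbf{k}$'' means $P$ has no induced subposet isomorphic to it. The incomparability graph of $P$ has the elements of $P$ as vertices, two distinct vertices being adjacent iff they are incomparable in $P$. A path decomposition of a graph $G$ is a sequence $B_1,\dots,B_m$ of vertex subsets such that each vertex lies in a nonempty set of consecutive $B_i$'s and each edge has both endpoints in some $B_i$; its width is $\max_i |B_i|-1$, and the pathwidth of $G$ is the minimum width of a path decomposition of $G$. *)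

From mathcomp Require Import all_boot all_order.
Set Implicit Arguments. Unset Strict Implicit. Unset Printing Implicit Defensive.
Import Order.Theory.
Local Open Scope order_scope.

Section PosetDefs.
Context {d : Order.disp_t} {T : finPOrderType d}.

Definition antichain (A : {set T}) : bool :=
  [forall x in A, forall y in A, (x != y) ==> (x >< y)].

Definition chain (A : {set T}) : bool :=
  [forall x in A, forall y in A, x >=< y].

Definition width : nat := \max_(A : {set T} | antichain A) #|A|.

Definition contains_kk (k : nat) : Prop :=
  exists A B : {set T}, [/\ chain A, chain B, #|A| = k, #|B| = k &
    forall a b, a \in A -> b \in B -> a >< b].

Definition incomp_adj (x y : T) : bool := (x != y) && (x >< y).

Definition path_decomposition (bags : seq {set T}) : Prop :=
  (forall v : T, exists i j : nat,
      [/\ i <= j, j < size bags &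
        forall t : nat, t < size bags -> (v \in nth set0 bags t) = (i <= t <= j)]%N)
  /\ (forall x y : T, incomp_adj x y ->
        exists2 B, B \in bags & (x \in B) && (y \in B)).

(** Width of a decomposition is max |B_i| - 1; pathwidth <= p iff some path
    decomposition has all bags of size <= p + 1. *)
Definition decomp_width (bags : seq {set T}) : nat :=
  (\max_(B <- bags) #|B|).-1.

End PosetDefs.

From mathcomp Require Import all_boot all_order zify.
Import Order.Theory.
Local Open Scope order_scope.
Set Implicit Arguments. Unset Strict Implicit. Unset Printing Implicit Defensive.

(** Call z "far below" x when some chain of at least k elements lies in the
    interval [z, x], and order P linearly by a key refining the number of
    elements far below.  Giving each vertex v the interval from its key to the
    largest key among v and its incomparable elements yields an interval model,
    hence a path decomposition, of the incomparability graph.  If a bag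
    contained a chain C of 2k - 2 elements, the element u responsible for the
    bag would be incomparable to all of C while its key is at least that of
    the top c of C; but then everything far below u is also far below c
    (otherwise k elements of C not above it and a k-chain below u would form
    k + k), and the bottom of C is far below c but not below u, so the key of
    u is smaller than that of c.  Hence chains in a bag have at most 2k - 3
    elements, and Mirsky's theorem bounds each bag by (2k - 3) w. *)

Lemma exists_subset_card (T : finType) (A : {set T}) n :
  (n <= #|A|)%N -> exists2 B : {set T}, B \subset A & #|B| = n.
Proof.
case/card_geqP=> s [uniq_s size_s sub_s]; exists [set x in s].
  by apply/subsetP=> x; rewrite inE => /sub_s.
by rewrite cardsE -size_s; apply/card_uniqP.
Qed.

Section Chains.
Context {d : Order.disp_t} {T : finPOrderType d}.
Implicit Types (A B S : {set T}) (a b c x y z : T).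

Lemma chainP A : reflect {in A &, forall x y, x >=< y} (chain A).
Proof.
apply: (iffP forall_inP) => [H x y xA yA | H x xA].
  by have /forall_inP := H x xA; apply.
by apply/forall_inP => y; apply: H.
Qed.

Lemma chainS A B : A \subset B -> chain B -> chain A.
Proof.
by move=> /subsetP sAB /chainP chB; apply/chainP => x y /sAB xB /sAB; apply: chB.
Qed.

Lemma chainU1 x A : chain A -> {in A, forall a, x >=< a} -> chain (x |: A).
Proof.
move=> /chainP chA xA; apply/chainP => a b.
rewrite !inE => /predU1P[-> | aA] /predU1P[-> | bA].
- exact: comparablexx.
- exact: xA.
- by rewrite comparable_sym; apply: xA.
- exact: chA.
Qed.

Definition itv_set x y := [set a | x <= a <= y].

Lemma itv_setP x y a : reflect (x <= a /\ a <= y) (a \in itv_set x y).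
Proof. by rewrite inE; apply: andP. Qed.

Lemma lt_of_subset_itv_set A x y :
  (1 < #|A|)%N -> A \subset itv_set x y -> x < y.
Proof.
move=> A2 /subsetP sA; have [a aA] : exists a, a \in A.
  by apply/set0Pn; rewrite -card_gt0 ltnW.
have /itv_setP[xa ay] := sA a aA; rewrite lt_neqAle (le_trans xa ay) andbT.
apply: contraTneq A2 => exy; rewrite -leqNgt -(cards1 x) subset_leq_card //.
apply/subsetP=> b /sA /itv_setP[xb]; rewrite -exy => bx.
by rewrite inE eq_le bx xb.
Qed.

Definition below x := [set z | z < x].

Lemma ltn_card_below x y : x < y -> (#|below x| < #|below y|)%N.
Proof.
move=> xy; apply: proper_card; apply/properP; split.
  by apply/subsetP => z; rewrite !inE => /lt_trans; apply.
by exists x; rewrite !inE ?xy ?ltxx.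
Qed.

Lemma comparable_leEcard_below x y :
  x >=< y -> (x <= y) = (#|below x| <= #|below y|)%N.
Proof.
case/comparable_ltgtP => [xy | yx | ->]; last by rewrite leqnn.
  by rewrite ltnW // ltn_card_below.
by rewrite leqNgt ltn_card_below.
Qed.

Lemma chain_extremal A : chain A -> A != set0 ->
  exists b c, [/\ b \in A, c \in A & A \subset itv_set b c].
Proof.
move=> /chainP chA /set0Pn[x0 x0A].
case: (arg_minnP (fun x => #|below x|) x0A) => b bA bmin.
case: (arg_maxnP (fun x => #|below x|) x0A) => c cA cmax.
exists b, c; split=> //; apply/subsetP => a aA; apply/itv_setP.
by split; rewrite comparable_leEcard_below ?chA //; [apply: bmin | apply: cmax].
Qed.

Lemma antichain_leq_width A : antichain A -> (#|A| <= width (T := T))%N.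
Proof. exact: leq_bigmax_cond. Qed.

Definition maximals S := [set x in S | [forall y in S, ~~ (x < y)]].

Lemma antichain_maximals S : antichain (maximals S).
Proof.
apply/forall_inP => x /setIdP[xS /forall_inP xmax].
apply/forall_inP => y /setIdP[yS /forall_inP ymax]; apply/implyP => neq_xy.
have := xmax y yS; have := ymax x xS.
rewrite /Order.comparable !le_eqVlt (negbTE neq_xy) eq_sym (negbTE neq_xy) /=.
by move=> /negbTE-> /negbTE->.
Qed.

(* Mirsky: the maximal elements form an antichain, and removing them lowers
   the height by one. *)
Lemma mirsky h S : (forall A, A \subset S -> chain A -> (#|A| <= h)%N) ->
  (#|S| <= h * width (T := T))%N.
Proof.
elim: h S => [|h IH] S height_S.
  rewrite mul0n leqn0 cards_eq0; apply: contraT => /set0Pn[x xS].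
  have := height_S [set x]; rewrite sub1set xS cards1; apply=> //.
  by apply/chainP => a b; rewrite !inE => /eqP-> /eqP->; apply: comparablexx.
have sMS : maximals S \subset S by apply/subsetP => x /setIdP[].
rewrite -(cardsID (maximals S) S) (setIidPr sMS) mulSn.
apply: leq_add; first exact/antichain_leq_width/antichain_maximals.
apply: IH => A sA chA; have [-> | nzA] := eqVneq A set0; first by rewrite cards0.
have [b [t [_ tA /subsetP sAbt]]] := chain_extremal chA nzA.
have /setDP[tS] := subsetP sA t tA; rewrite inE tS /=.
case/forall_inPn => y yS /negPn ty.
have top_t a : a \in A -> a < y.
  by move=> /sAbt /itv_setP[_ at_]; apply: le_lt_trans ty.
have yA : y \notin A by apply/negP => /top_t; rewrite ltxx.
have := height_S (y |: A); rewrite cardsU1 yA add1n ltnS; apply.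
  by rewrite subUset sub1set yS (subset_trans sA) ?subsetDl.
apply: chainU1 => // a /top_t ay; rewrite comparable_sym.
exact: lt_comparable.
Qed.

End Chains.

Section FarBelow.
Context {d : Order.disp_t} {T : finPOrderType d}.
Implicit Types (A C : {set T}) (a b c u x y z : T).
Variable k : nat.

Definition far_below x :=
  [set z | [exists A, [&& chain A, k <= #|A| & A \subset itv_set z x]]].

Lemma far_belowP x z : reflect
  (exists A, [/\ chain A, k <= #|A| & A \subset itv_set z x]%N) (z \in far_below x).
Proof.
rewrite inE; apply: (iffP existsP) => [[A /and3P[]] | [A []]]; first by exists A.
by exists A; apply/and3P.
Qed.

Lemma far_below_le x z : (0 < k)%N -> z \in far_below x -> z <= x.
Proof.
move=> k_gt0 /far_belowP[A [_ kA /subsetP sA]].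
have [a aA] : exists a, a \in A by apply/set0Pn; rewrite -card_gt0 (leq_trans k_gt0).
by have /itv_setP[za ax] := sA a aA; apply: le_trans ax.
Qed.

Lemma far_below_subset x y : x <= y -> far_below x \subset far_below y.
Proof.
move=> xy; apply/subsetP => z /far_belowP[A [chA kA /subsetP sA]].
apply/far_belowP; exists A; split=> //; apply/subsetP => a /sA /itv_setP[za ax].
by apply/itv_setP; split=> //; apply: le_trans xy.
Qed.

(* If z is far below u via a chain Z, then fewer than k elements of C fail to lie
   above z, since together with Z they would form k + k. *)
Lemma far_below_subset_incomparable u c C :
  (1 < k)%N -> ~ contains_kk (T := T) k -> chain C -> (2 * k - 2 <= #|C|)%N ->
  {in C, forall a, a <= c} -> {in C, forall a, u >< a} ->
  far_below u \subset far_below c.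
Proof.
move=> k_gt1 no_kk chC C_big C_c u_C; apply/subsetP => z zu.
have z_u := far_below_le (ltnW k_gt1) zu.
have [Z [chZ kZ /subsetP sZ]] := far_belowP _ _ zu.
pose Cz := [set a in C | z <= a].
have sCzC : Cz \subset C by apply/subsetP => a /setIdP[].
have low_small : (#|C :\: Cz| < k)%N.
  rewrite ltnNge; apply/negP => /exists_subset_card[C' sC' kC'].
  have [Z' sZ' kZ'] := exists_subset_card kZ.
  apply: no_kk; exists Z', C'; split => //; first exact: chainS chZ.
    by apply: chainS sC' (chainS _ chC); apply: subsetDl.
  move=> x y /(subsetP sZ') /sZ /itv_setP[zx xu].
  move=> /(subsetP sC') /setDP[yC]; rewrite inE yC /= => zNy.
  rewrite /Order.comparable negb_or; apply/andP; split.
    by apply: contra zNy; apply: le_trans zx.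
  apply/negP => yx; have := u_C y yC.
  by rewrite /Order.comparable (le_trans yx xu) orbT.
have Cz_big : (k - 1 <= #|Cz|)%N.
  have : #|Cz| + #|C :\: Cz| = #|C| by rewrite -(cardsID Cz C) (setIidPr sCzC).
  move: C_big low_small; lia.
have zNCz : z \notin Cz.
  apply/negP => /setIdP[zC _]; have := u_C z zC.
  by rewrite /Order.comparable z_u orbT.
have [a0 a0Cz] : exists a0, a0 \in Cz by apply/set0Pn; rewrite -card_gt0; lia.
have /setIdP[a0C za0] := a0Cz; have zc := le_trans za0 (C_c a0 a0C).
apply/far_belowP; exists (z |: Cz); split.
- apply: chainU1 (chainS sCzC chC) _.
  by move=> a /setIdP[_ za]; apply: le_comparable.
- by rewrite cardsU1 zNCz; lia.
apply/subsetP => a; rewrite !inE => /predU1P[-> | /andP[aC za]].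
  by rewrite lexx.
by rewrite za C_c.
Qed.

Lemma far_below_proper_incomparable u b c C :
  (1 < k)%N -> ~ contains_kk (T := T) k -> chain C -> (2 * k - 2 <= #|C|)%N ->
  b \in C -> C \subset itv_set b c -> {in C, forall a, u >< a} ->
  far_below u \proper far_below c.
Proof.
move=> k_gt1 no_kk chC C_big bC /subsetP sC u_C.
rewrite properEneq (far_below_subset_incomparable (C := C)) //; last first.
  by move=> a /sC /itv_setP[].
apply/andP; split=> //; apply/negP => /eqP eq_far.
have : b \in far_below c.
  by apply/far_belowP; exists C; split=> //; [lia | exact/subsetP].
rewrite -eq_far => /(far_below_le (ltnW k_gt1)) bu.
by have := u_C b bC; rewrite comparable_sym /Order.comparable bu.
Qed.

End FarBelow.

Section IntervalBags.
Context {d : Order.disp_t} {T : finPOrderType d}.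
Implicit Types (A : {set T}) (a b c u v x y : T).
Variable key : T -> nat.

Definition reach x := (\max_(u | (u == x) || (x >< u)) key u)%N.

Definition interval_bag t := [set v | key v <= t <= reach v]%N.

Definition interval_bags := [seq interval_bag t | t <- iota 0 (\max_u key u).+1].

Lemma leq_key_reach x u : (u == x) || (x >< u) -> (key u <= reach x)%N.
Proof. exact: (@leq_bigmax_cond _ (fun u => (u == x) || (x >< u))). Qed.

Lemma reach_attained x : exists2 u, (u == x) || (x >< u) & reach x = key u.
Proof.
have [|u uPx reach_u] := @eq_bigmax_cond _ [pred u | (u == x) || (x >< u)] key.
  by apply/card_gt0P; exists x; rewrite inE eqxx.
by exists u.
Qed.

Lemma interval_bags_path_decomposition : path_decomposition interval_bags.
Proof.
have in_bags t : (t <= \max_u key u)%N -> interval_bag t \in interval_bags.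
  by move=> t_le; apply: map_f; rewrite mem_iota.
split=> [v | x y /andP[_ xy]].
  exists (key v), (reach v); split.
  - by rewrite leq_key_reach ?eqxx.
  - rewrite size_map size_iota ltnS; have [u _ ->] := reach_attained v.
    exact: leq_bigmax.
  move=> t; rewrite size_map size_iota => t_lt.
  by rewrite (nth_map 0%N) ?size_iota // nth_iota // inE.
wlog le_xy : x y xy / (key x <= key y)%N.
  move=> wlog_xy; case: (leqP (key x) (key y)) => [|/ltnW yx]; first exact: wlog_xy.
  have yx_inc : y >< x by rewrite comparable_sym.
  have [B BP /andP[yB xB]] := wlog_xy y x yx_inc yx.
  by exists B; rewrite ?xB ?yB.
exists (interval_bag (key y)); first by apply/in_bags/leq_bigmax.
by rewrite !inE le_xy leqnn !leq_key_reach ?eqxx ?xy ?orbT.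
Qed.

Hypothesis key_lt : {homo key : x y / x < y >-> (x < y)%N}.

(* The element realising [reach b] for the bottom [b] of a chain in a bag has
   key at least that of the top [c], which forces it off the whole chain. *)
Lemma interval_bag_incomparable t A b c :
  A \subset interval_bag t -> b \in A -> c \in A -> A \subset itv_set b c ->
  b < c -> exists2 u, (key c <= key u)%N & {in A, forall a, u >< a}.
Proof.
move=> /subsetP sA bA cA /subsetP sAbc bc.
have := sA b bA; rewrite inE => /andP[_ t_reach_b].
have := sA c cA; rewrite inE => /andP[key_c_t _].
have [u /predU1P[-> | bu] reach_u] := reach_attained b.
  by have := key_lt bc; rewrite ltnNge -reach_u (leq_trans key_c_t).
have key_cu : (key c <= key u)%N by rewrite -reach_u (leq_trans key_c_t).
exists u => // a /sAbc /itv_setP[ba ac]; rewrite /Order.comparable negb_or.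
apply/andP; split; apply/negP; last first.
  by move=> au; move: bu; rewrite /Order.comparable (le_trans ba au).
move=> ua; move: (le_trans ua ac); rewrite le_eqVlt => /predU1P[eq_uc | uc].
  by move: bu; rewrite /Order.comparable eq_uc (ltW bc).
by have := key_lt uc; rewrite ltnNge key_cu.
Qed.

End IntervalBags.

Section LexKey.
Context {d : Order.disp_t} {T : finPOrderType d}.
Variable weight : T -> nat.

(* Since [#|below x| <= #|T|], the weight is the dominant component. *)
Definition lex_key x := (weight x * #|T|.+1 + #|below x|)%N.

Lemma lex_key_lt_weight x y : (weight x < weight y)%N -> (lex_key x < lex_key y)%N.
Proof.
move=> wxy; apply: (@leq_trans ((weight x).+1 * #|T|.+1)); last first.
  by rewrite (leq_trans _ (leq_addr _ _)) // leq_mul2r wxy orbT.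
by rewrite /lex_key mulSn [X in (_ < X)%N]addnC ltn_add2l ltnS max_card.
Qed.

Hypothesis weight_homo : {homo weight : x y / x <= y >-> (x <= y)%N}.

Lemma lex_key_homo_lt : {homo lex_key : x y / x < y >-> (x < y)%N}.
Proof.
move=> x y xy; rewrite /lex_key -addnS leq_add ?ltn_card_below //.
by rewrite leq_mul2r weight_homo ?orbT // ltW.
Qed.

End LexKey.

Section KPlusKFree.
Context {d : Order.disp_t} {T : finPOrderType d}.
Variable k : nat.
Hypotheses (k_gt1 : (1 < k)%N) (no_kk : ~ contains_kk (T := T) k).

Definition far_below_key := lex_key (fun x : T => #|far_below k x|).

Lemma chain_interval_bag_card t (A : {set T}) :
  chain A -> A \subset interval_bag far_below_key t -> (#|A| <= 2 * k - 3)%N.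
Proof.
move=> chA sA; rewrite leqNgt; apply/negP => A_big.
have [|b [c [bA cA sAbc]]] := chain_extremal chA; first by rewrite -card_gt0; lia.
have bc : b < c by apply: lt_of_subset_itv_set sAbc; lia.
have key_homo : {homo far_below_key : x y / x < y >-> (x < y)%N}.
  by apply: lex_key_homo_lt => x y xy; apply/subset_leq_card/far_below_subset.
have [u key_cu u_A] := interval_bag_incomparable key_homo sA bA cA sAbc bc.
have : far_below k u \proper far_below k c.
  by apply: (far_below_proper_incomparable (C := A)) => //; lia.
move/proper_card/(@lex_key_lt_weight _ _ (fun x => #|far_below k x|) u c).
by rewrite ltnNge key_cu.
Qed.

End KPlusKFree.

Theorem corollary2 (d : Order.disp_t) (T : finPOrderType d) (k : nat) :
  (2 <= k)%N -> ~ contains_kk (T := T) k ->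
  exists bags : seq {set T},
    path_decomposition bags /\
    (forall B, B \in bags -> #|B| <= (2 * k - 3) * width (T := T))%N.
Proof.
move=> k_gt1 no_kk; exists (interval_bags (far_below_key k)).
split=> [|_ /mapP[t _ ->]]; first exact: interval_bags_path_decomposition.
apply: mirsky => A sA chA; exact: (chain_interval_bag_card k_gt1 no_kk chA sA).
Qed.
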